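(* Let $a,b\in\mathbb{Q}$ be such that $f(x)=x^{12}+ax^6+b$ is irreducible over $\mathbb{Q}$, and let $\theta$ be a root of $f(x)$. Then for every $r\in\mathbb{Q}\setminus\mathbb{Q}^2$, we have $r\in\mathbb{Q}(\theta)^2$ if and only if at least one of $r(a^2-4b)$, $r(-a+2\sqrt{b})$, $r(-a-2\sqrt{b})$ lies in $\mathbb{Q}^2$.
   Context: For a field $K$, $K^2$ denotes the set of squares in $K$; $\mathbb{Q}^2$ is the set of rational squares. $\sqrt{b}$ denotes a fixed complex square root of $b$. *)

From HB Require Import structures.
From mathcomp Require Import all_boot all_order all_algebra all_field.
Set Implicit Arguments. Unset Strict Implicit. Unset Printing Implicit Defensive.
Import Order.TTheory GRing.Theory Num.Theory.
Local Open Scope ring_scope.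

Definition f12 (a b : rat) : {poly rat} := 'X^12 + a *: 'X^6 + b%:P.

Definition ratsq (r : rat) : Prop := exists q : rat, r = q ^+ 2.

Definition algC_in_Qsq (x : algC) : Prop := exists q : rat, x = (ratr q) ^+ 2.

Definition in_Qadj (theta x : algC) : Prop :=
  exists p q : {poly rat},
    (map_poly ratr q).[theta] != 0 /\
    x = (map_poly ratr p).[theta] / (map_poly ratr q).[theta].

From HB Require Import structures.
From mathcomp Require Import all_boot all_order all_algebra all_field.
From mathcomp Require Import ring zify.
Import Order.TTheory GRing.Theory Num.Theory.

Set Implicit Arguments.
Unset Strict Implicit.
Unset Printing Implicit Defensive.

Local Open Scope ring_scope.

(* Put u = theta^3 and w = theta^6, so that Q(theta) ⊃ Q(u) ⊃ Q(w) ⊃ Q has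
   degrees 3, 2, 2 and w^2 + a w + b = 0.  If y in Q(theta) squares to r in Q,
   write y = alpha + theta beta + theta^2 gamma over Q(u): the theta- and
   theta^2-coordinates of y^2 vanish, which forces beta^3 = u gamma^3, and as
   X^3 - u has no root in Q(u) this gives beta = gamma = 0.  Next write
   y = rho + u sigma over Q(w); the u-coordinate of y^2 gives rho sigma = 0.
   If y = rho lies in Q(w) = Q(sqrt(a^2 - 4b)), then r (a^2 - 4b) is a square;
   if y = u sigma, then w sigma^2 = r, and a computation in the basis 1, w
   shows b = s^2 with r (-a - 2s) a square.  Conversely q / (2w + a) and
   r (w + s) / (q u) are explicit square roots of r in Q(theta). *)

Lemma size_monic_trinomial (R : nzRingType) (n m : nat) (a b : R) :
  (0 < m < n)%N -> size ('X^n + a *: 'X^m + b%:P) = n.+1.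
Proof.
move=> lt_0mn; rewrite -addrA size_polyDl size_polyXn //.
apply: leq_ltn_trans (size_polyD _ _) _; rewrite gtn_max; apply/andP; split.
  by apply: leq_ltn_trans (size_scale_leq _ _) _; rewrite size_polyXn; lia.
by apply: leq_ltn_trans (size_polyC_leq1 _) _; lia.
Qed.

Lemma eq_of_sub_multiple (R : comNzRingType) (x y k z : R) :
  z = 0 -> x - y = k * z -> x = y.
Proof. by move=> -> /eqP; rewrite mulr0 subr_eq0 => /eqP. Qed.

Section PolyDecomposition.
Variables (R : comNzRingType) (k : nat).
Hypothesis k_gt0 : (0 < k)%N.

Lemma coef_sum_XnM_comp_Xn (A : nat -> {poly R}) m l : (l < k)%N ->
  (\sum_(i < k) 'X^i * (A i \Po 'X^k))`_(m * k + l) = (A l)`_m.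
Proof.
move=> lt_lk; rewrite coef_sum (bigD1 (Ordinal lt_lk)) //= big1 ?addr0.
  rewrite coefXnM ltnNge leq_addl /= addnK coef_comp_poly_Xn //.
  by rewrite dvdn_mull // mulnK.
move=> i /eqP ne_il; rewrite coefXnM; case: ltnP => // le_i.
rewrite coef_comp_poly_Xn //; case: ifP => //.
rewrite -(eqn_mod_dvd _ le_i) modnMDl !modn_small // => /eqP eq_li.
by case: ne_il; apply: val_inj.
Qed.

Lemma sum_XnM_comp_Xn_eq0 (A : nat -> {poly R}) :
  \sum_(i < k) 'X^i * (A i \Po 'X^k) = 0 -> forall i, (i < k)%N -> A i = 0.
Proof.
move=> S0 i lt_ik; apply/polyP => m.
by rewrite -(coef_sum_XnM_comp_Xn A m lt_ik) S0 !coef0.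
Qed.

Lemma sum_XnM_comp_Xn_decomp (p : {poly R}) : exists A : nat -> {poly R},
  p = \sum_(i < k) 'X^i * (A i \Po 'X^k).
Proof.
pose A l := \poly_(m < size p) p`_(m * k + l); exists A.
apply/polyP => j; rewrite [in RHS](divn_eq j k) coef_sum_XnM_comp_Xn ?ltn_pmod //.
rewrite coef_poly -divn_eq; case: ltnP => // le_p_jk.
by rewrite nth_default // (leq_trans le_p_jk) // leq_div.
Qed.

End PolyDecomposition.

Section PolyEval.
Variables (F L : fieldType) (iota : {rmorphism F -> L}).

Definition peval (x : L) (p : {poly F}) : L := (map_poly iota p).[x].

Section EvalRules.
Variable x : L.

Lemma peval0 : peval x 0 = 0.
Proof. by rewrite /peval rmorph0 horner0. Qed.

Lemma pevalD p q : peval x (p + q) = peval x p + peval x q.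
Proof. by rewrite /peval rmorphD hornerD. Qed.

Lemma pevalN p : peval x (- p) = - peval x p.
Proof. by rewrite /peval rmorphN hornerN. Qed.

Lemma pevalM p q : peval x (p * q) = peval x p * peval x q.
Proof. by rewrite /peval rmorphM hornerM. Qed.

Lemma pevalMn p n : peval x (p *+ n) = peval x p *+ n.
Proof. by rewrite /peval rmorphMn hornerMn. Qed.

Lemma pevalC c : peval x c%:P = iota c.
Proof. by rewrite /peval map_polyC hornerC. Qed.

Lemma pevalZ c p : peval x (c *: p) = iota c * peval x p.
Proof. by rewrite -mul_polyC pevalM pevalC. Qed.

Lemma pevalX : peval x 'X = x.
Proof. by rewrite /peval map_polyX hornerX. Qed.

Lemma pevalXn n : peval x 'X^n = x ^+ n.
Proof. by rewrite /peval map_polyXn hornerXn. Qed.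

(* [pevalXn] and [pevalMn] come first: 'X^n and p *+ n unfold to products
   and sums, which [pevalM] and [pevalD] would otherwise split. *)
Definition pevalE :=
  (peval0, pevalXn, pevalMn, pevalD, pevalN, pevalZ, pevalM, pevalC, pevalX).

Lemma peval_comp_Xn (q : {poly F}) (k : nat) :
  peval x (q \Po 'X^k) = peval (x ^+ k) q.
Proof. by rewrite /peval map_comp_poly horner_comp map_polyXn hornerXn. Qed.

Lemma peval_sum_XnM_comp_Xn (A : nat -> {poly F}) (k : nat) :
  peval x (\sum_(i < k) 'X^i * (A i \Po 'X^k))
    = \sum_(i < k) x ^+ i * peval (x ^+ k) (A i).
Proof.
rewrite /peval rmorph_sum /= horner_sum; apply: eq_bigr => i _.
by rewrite -/(peval x _) pevalM pevalXn peval_comp_Xn.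
Qed.

End EvalRules.

Definition free_powers (x : L) (n : nat) :=
  forall q : {poly F}, (size q <= n)%N -> peval x q = 0 -> q = 0.

Section IrreducibleRoot.
Variables (p : {poly F}) (x : L).
Hypotheses (p_irr : irreducible_poly p) (px0 : peval x p = 0).

Lemma irredp_peval_inv (q : {poly F}) : ~~ (p %| q) ->
  exists v, peval x v * peval x q = 1.
Proof.
rewrite -irreducible_poly_coprime //.
case/Bezout_eq1_coprimepP => -[u v] /= /(congr1 (peval x)).
by rewrite !pevalE px0 mulr0 add0r rmorph1; exists v.
Qed.

Lemma irredp_free_powers : free_powers x (size p).-1.
Proof.
move=> q le_qp qx0; apply/eqP; apply: contraT => q_neq0.
have [|v] := irredp_peval_inv (q := q); last first.
  by rewrite qx0 mulr0 => /eqP; rewrite eq_sym oner_eq0.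
apply: contraL le_qp => /(dvdp_leq q_neq0) le_pq.
by rewrite -ltnNge prednK // size_poly_gt0 irredp_neq0.
Qed.

End IrreducibleRoot.

Lemma free_powers_exp (x : L) (k n : nat) :
  (0 < k)%N -> free_powers x (k * n) -> free_powers (x ^+ k) n.
Proof.
move=> k_gt0 free_x q le_qn qxk0; have [//|q_neq0] := eqVneq q 0.
have qk0 : q \Po 'X^k = 0.
  apply: free_x; last by rewrite peval_comp_Xn.
  apply: leq_trans (size_comp_poly_leq _ _) _; rewrite size_polyXn /=.
  move: le_qn (size_poly_gt0 q); rewrite q_neq0; case: (size q) => //= s.
  nia.
apply/polyP => m; have := congr1 (fun s : {poly F} => s`_(m * k)) qk0.
by rewrite /= coef_comp_poly_Xn // dvdn_mull // mulnK // !coef0.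
Qed.

Section Tower.
Variables (x : L) (k : nat).
Hypothesis k_gt0 : (0 < k)%N.

Lemma tower_decomp (p : {poly F}) : exists A : nat -> {poly F},
  peval x p = \sum_(i < k) x ^+ i * peval (x ^+ k) (A i).
Proof.
have [A ->] := sum_XnM_comp_Xn_decomp k_gt0 p.
by exists A; rewrite peval_sum_XnM_comp_Xn.
Qed.

Lemma tower_free (n : nat) (g : {poly F}) (A : nat -> {poly F}) :
    free_powers x (k * n) -> size g = n.+1 -> peval (x ^+ k) g = 0 ->
    \sum_(i < k) x ^+ i * peval (x ^+ k) (A i) = 0 ->
  forall i, (i < k)%N -> peval (x ^+ k) (A i) = 0.
Proof.
move=> free_x size_g gxk0 sum0.
(* Reducing modulo g keeps the values at x^k and brings the combination
   below degree k n, where it must vanish coefficientwise. *)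
pose B i := A i %% g.
have g_neq0 : g != 0 by rewrite -size_poly_gt0 size_g.
have sizeB i : (size (B i) <= n)%N by rewrite -ltnS -size_g ltn_modp.
have evB i : peval (x ^+ k) (A i) = peval (x ^+ k) (B i).
  by rewrite {1}(divp_eq (A i) g) !pevalE gxk0 mulr0 add0r.
have S0 : \sum_(i < k) 'X^i * (B i \Po 'X^k) = 0.
  apply: free_x; last first.
    rewrite peval_sum_XnM_comp_Xn -[RHS]sum0.
    by apply: eq_bigr => i _; rewrite evB.
  apply/leq_sizeP => j le_kn_j; rewrite (divn_eq j k).
  rewrite coef_sum_XnM_comp_Xn ?ltn_pmod // nth_default //.
  by rewrite (leq_trans (sizeB _)) // leq_divRL // mulnC.
by move=> i lt_ik; rewrite evB (sum_XnM_comp_Xn_eq0 k_gt0 S0) // peval0.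
Qed.

End Tower.

Lemma tower2_decomp (x : L) (p : {poly F}) :
  exists A B, peval x p = peval (x ^+ 2) A + x * peval (x ^+ 2) B.
Proof.
have [A ->] := tower_decomp x (ltn0Sn 1) p.
by exists (A 0%N), (A 1%N); rewrite !big_ord_recl big_ord0 /= expr0 mul1r expr1 addr0.
Qed.

Lemma tower3_decomp (x : L) (p : {poly F}) : exists A B C,
  peval x p = peval (x ^+ 3) A + x * peval (x ^+ 3) B + x ^+ 2 * peval (x ^+ 3) C.
Proof.
have [A ->] := tower_decomp x (ltn0Sn 2) p.
exists (A 0%N), (A 1%N), (A 2%N).
by rewrite !big_ord_recl big_ord0 /= expr0 mul1r expr1 addr0 addrA.
Qed.

Lemma tower2_free (x : L) (n : nat) (g A B : {poly F}) :
    free_powers x (2 * n) -> size g = n.+1 -> peval (x ^+ 2) g = 0 ->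
    peval (x ^+ 2) A + x * peval (x ^+ 2) B = 0 ->
  peval (x ^+ 2) A = 0 /\ peval (x ^+ 2) B = 0.
Proof.
move=> free_x size_g gx0 sum0.
have := tower_free (A := nth 0 [:: A; B]) (ltn0Sn 1) free_x size_g gx0.
rewrite !big_ord_recl big_ord0 /= expr0 mul1r expr1 addr0 => /(_ sum0) ev0.
by split; [exact: (ev0 0%N) | exact: (ev0 1%N)].
Qed.

Lemma tower3_free (x : L) (n : nat) (g A B C : {poly F}) :
    free_powers x (3 * n) -> size g = n.+1 -> peval (x ^+ 3) g = 0 ->
    peval (x ^+ 3) A + x * peval (x ^+ 3) B + x ^+ 2 * peval (x ^+ 3) C = 0 ->
  [/\ peval (x ^+ 3) A = 0, peval (x ^+ 3) B = 0 & peval (x ^+ 3) C = 0].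
Proof.
move=> free_x size_g gx0 sum0.
have := tower_free (A := nth 0 [:: A; B; C]) (ltn0Sn 2) free_x size_g gx0.
rewrite !big_ord_recl big_ord0 /= expr0 mul1r expr1 addr0 addrA => /(_ sum0) ev0.
by split; [exact: (ev0 0%N) | exact: (ev0 1%N) | exact: (ev0 2%N)].
Qed.

End PolyEval.

Local Notation ev := (peval ratr).

Lemma in_Qadj_peval (p : {poly rat}) (x y : algC) :
  irreducible_poly p -> ev x p = 0 -> in_Qadj x y -> exists P, y = ev x P.
Proof.
move=> p_irr px0 [P [Q [Qx_neq0 ->]]].
rewrite -/(ev x P) -/(ev x Q) in Qx_neq0 *.
have [|V VQ1] := irredp_peval_inv p_irr px0 (q := Q).
  by apply: contra Qx_neq0 => /dvdpP[D ->]; rewrite pevalM px0 mulr0.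
by exists (P * V); rewrite pevalM -[ev x V](mulfK Qx_neq0) VQ1 mul1r.
Qed.

Lemma nonsquare_neq0 (r : rat) : ~ ratsq r -> r != 0.
Proof. by apply: contra_notN => /eqP ->; exists 0; rewrite expr0n. Qed.

Lemma in_Qadj_frac (x : algC) (P Q : {poly rat}) :
  ev x Q != 0 -> in_Qadj x (ev x P / ev x Q).
Proof. by move=> Qx_neq0; exists P, Q. Qed.

Section Dodecic.
Variables (a b : rat) (theta : algC).
Hypotheses (f_irr : irreducible_poly (f12 a b)) (f_theta : ev theta (f12 a b) = 0).

Local Notation u := (theta ^+ 3).
Local Notation w := (theta ^+ 6).

Lemma free_theta : free_powers ratr theta 12.
Proof. by have := irredp_free_powers f_irr f_theta; rewrite /f12 size_monic_trinomial. Qed.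

Lemma free_u : free_powers ratr u 4.
Proof. exact: (free_powers_exp (n := 4) (ltn0Sn 2) free_theta). Qed.

Lemma w_root : w ^+ 2 + ratr a * w + ratr b = 0.
Proof. by rewrite -[w ^+ 2]exprM -[RHS]f_theta /f12 !pevalE. Qed.

Lemma ratr_b : ratr b = - w ^+ 2 - ratr a * w.
Proof. by rewrite -[LHS]subr0 -w_root; ring. Qed.

Lemma w_coords_eq0 (c d : rat) : ratr c + ratr d * w = 0 -> c = 0 /\ d = 0.
Proof.
move=> cdw0; have cd0 : c%:P + d *: 'X = 0 :> {poly rat}.
  apply: (free_powers_exp (n := 2) (ltn0Sn 5) free_theta); last by rewrite !pevalE.
  apply: leq_trans (size_polyD _ _) _; rewrite geq_max; apply/andP; split.
    exact: leq_trans (size_polyC_leq1 _) _.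
  by apply: leq_trans (size_scale_leq _ _) _; rewrite size_polyX.
have := congr1 (fun P : {poly rat} => P`_0) cd0.
have := congr1 (fun P : {poly rat} => P`_1) cd0.
by rewrite /= !coefD !coefZ !coefC !coefX /= !mulr0 !mulr1 !addr0 !add0r => -> ->.
Qed.

Lemma theta_neq0 : theta != 0.
Proof.
apply/eqP => theta0; have /w_coords_eq0[_ /eqP] : ratr 0 + ratr 1 * w = 0.
  by rewrite theta0 expr0n mulr0 addr0 rmorph0.
by rewrite oner_eq0.
Qed.

Lemma peval_w_coords (P : {poly rat}) :
  exists c d : rat, ev w P = ratr c + ratr d * w.
Proof.
elim/poly_ind: P => [|P e [c [d IH]]]; first by exists 0, 0; rewrite !pevalE !rmorph0 mul0r addr0.
exists (e - b * d), (c - a * d).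
by rewrite !pevalE IH !(rmorphB, rmorphM) /= ratr_b; ring.
Qed.

Lemma cube_tower_free (A B C : {poly rat}) :
  ev u A + theta * ev u B + theta ^+ 2 * ev u C = 0 ->
  [/\ ev u A = 0, ev u B = 0 & ev u C = 0].
Proof.
apply: (tower3_free (n := 4) (g := 'X^4 + a *: 'X^2 + b%:P) free_theta).
  by rewrite size_monic_trinomial.
by rewrite -[RHS]f_theta /f12 !pevalE; ring.
Qed.

Lemma u_not_cube (B C : {poly rat}) : ev u B ^+ 3 = u * ev u C ^+ 3 -> ev u C = 0.
Proof.
(* A root beta/gamma of X^3 - u in Q(u) would make one of the two factors of
   u gamma^3 - beta^3 vanish, against the independence of 1, theta, theta^2. *)
move=> cube_eq.
have : (theta * ev u C - ev u B)
       * (theta ^+ 2 * ev u C ^+ 2 + theta * ev u C * ev u B + ev u B ^+ 2) = 0.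
  by rewrite -(subrr (ev u B ^+ 3)) {1}cube_eq; ring.
move/eqP; rewrite mulf_eq0 => /orP[] /eqP root0.
  have /cube_tower_free[] // : ev u (- B) + theta * ev u C + theta ^+ 2 * ev u 0 = 0.
  by rewrite !pevalE mulr0 addr0 addrC.
have /cube_tower_free[_ _ /eqP] :
    ev u (B * B) + theta * ev u (C * B) + theta ^+ 2 * ev u (C * C) = 0.
  by rewrite !pevalE -root0; ring.
by rewrite pevalM mulf_eq0 orbb => /eqP.
Qed.

Lemma rat_sqrt_in_Qu (r : rat) (P : {poly rat}) :
  ev theta P ^+ 2 = ratr r -> exists A, ev theta P = ev u A.
Proof.
have [A [B [C ->]]] := tower3_decomp ratr theta P => sq_r.
have /cube_tower_free[_] : ev u (A * A + 'X * B * C *+ 2 - r%:P)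
    + theta * ev u (A * B *+ 2 + 'X * C * C)
    + theta ^+ 2 * ev u (B * B + A * C *+ 2) = 0.
  by rewrite !pevalE /= -sq_r; ring.
rewrite !pevalE => e1 e2.
have cube : ev u B ^+ 3 = u * ev u C ^+ 3.
  have comb : ev u B ^+ 3 - u * ev u C ^+ 3
      = ev u B * (ev u B * ev u B + ev u A * ev u C *+ 2)
        - ev u C * (ev u A * ev u B *+ 2 + u * ev u C * ev u C) by ring.
  by apply: subr0_eq; rewrite comb e1 e2 !mulr0 subrr.
have C0 := u_not_cube cube.
have B0 : ev u B = 0.
  by move: e2; rewrite C0 mulr0 mul0rn addr0 => /eqP; rewrite mulf_eq0 orbb => /eqP.
by exists A; rewrite B0 C0 !mulr0 !addr0.
Qed.

Lemma rat_sqrt_Qu_cases (r : rat) (A : {poly rat}) : ev u A ^+ 2 = ratr r ->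
  (exists P, ev u A = ev w P) \/ (exists Q, ev u A = u * ev w Q).
Proof.
have w_u2 : w = u ^+ 2 by rewrite -exprM.
have [P [Q ->]] := tower2_decomp ratr u A; rewrite -w_u2 => sq_r.
have [_ /eqP] : ev w (P * P + 'X * Q * Q - r%:P) = 0 /\ ev w (P * Q *+ 2) = 0.
  rewrite w_u2; apply: (tower2_free (n := 2) (g := 'X^2 + a *: 'X^1 + b%:P) free_u).
  - by rewrite size_monic_trinomial.
  - by rewrite -w_u2 -[RHS]w_root !pevalE expr1.
  - by rewrite -w_u2 !pevalE /= -sq_r; ring.
rewrite pevalMn mulrn_eq0 /= pevalM mulf_eq0 => /orP[] /eqP ev0.
  by right; exists Q; rewrite ev0 add0r.
by left; exists P; rewrite ev0 mulr0 addr0.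
Qed.

Lemma rat_sqrt_in_Qw (r : rat) (P : {poly rat}) :
  ~ ratsq r -> ev w P ^+ 2 = ratr r -> ratsq (r * (a ^+ 2 - 4%:R * b)).
Proof.
move=> r_nsq; have [c [d ->]] := peval_w_coords P => sq_r.
have [e0 e1] : c ^+ 2 - b * d ^+ 2 - r = 0 /\ c * d *+ 2 - a * d ^+ 2 = 0.
  apply: w_coords_eq0; rewrite !(rmorphB, rmorphD, rmorphM, rmorphMn, rmorphXn) /=.
  by rewrite -sq_r ratr_b; ring.
have d_neq0 : d != 0.
  apply: contra_notN r_nsq => /eqP d0; exists c.
  by apply: (eq_of_sub_multiple (k := -1) e0); rewrite d0; ring.
(* Then a = 2c/d, so r (a^2 - 4b) = 4 r (c^2 - b d^2) / d^2 = (2r/d)^2. *)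
have a_eq : a = c *+ 2 / d.
  by apply: (eq_of_sub_multiple (k := - d ^- 2) e1); field.
exists (r *+ 2 / d); rewrite a_eq.
by apply: (eq_of_sub_multiple (k := 4%:R * r / d ^+ 2) e0); field.
Qed.

Lemma rat_sqrt_in_uQw (r : rat) (Q : {poly rat}) : r != 0 ->
  (u * ev w Q) ^+ 2 = ratr r -> exists2 s, b = s ^+ 2 & ratsq (r * (- a - 2%:R * s)).
Proof.
move=> r_neq0; have [c [d ->]] := peval_w_coords Q => sq_r.
pose D := c * d *+ 2 - a * d ^+ 2.
have [e0 e1] : - b * D - r = 0 /\ c ^+ 2 - b * d ^+ 2 - a * D = 0.
  apply: w_coords_eq0; rewrite /D !(rmorphB, rmorphD, rmorphN, rmorphM, rmorphMn, rmorphXn) /=.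
  by rewrite -sq_r ratr_b; ring.
have d_neq0 : d != 0.
  apply: contra_neq r_neq0 => d0; have D0 : D = 0 by rewrite /D d0; ring.
  by apply: (eq_of_sub_multiple (k := -1) e0); rewrite D0; ring.
(* With s = c/d - a the coordinate equations read b = s^2 and
   r = s^2 d^2 (-a - 2s). *)
pose s := c / d - a.
have b_eq : b = s ^+ 2.
  by apply: (eq_of_sub_multiple (k := - d ^- 2) e1); rewrite /s /D; field.
exists s => //; exists (s * d * (- a - 2%:R * s)); rewrite b_eq in e0.
by apply: (eq_of_sub_multiple (k := a + 2%:R * s) e0); rewrite /s /D; field.
Qed.

Lemma rat_sqrt_in_Qadj_cases (r : rat) (y : algC) :
    ~ ratsq r -> in_Qadj theta y -> ratr r = y ^+ 2 ->
  ratsq (r * (a ^+ 2 - 4%:R * b))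
  \/ exists2 s, b = s ^+ 2 & ratsq (r * (- a - 2%:R * s)).
Proof.
move=> r_nsq /(in_Qadj_peval f_irr f_theta)[P ->] /esym sq_y.
have [A eqA] := rat_sqrt_in_Qu sq_y; rewrite eqA in sq_y.
have [[R eqR]|[Q eqQ]] := rat_sqrt_Qu_cases sq_y.
  by rewrite eqR in sq_y; left; apply: (rat_sqrt_in_Qw r_nsq sq_y).
by rewrite eqQ in sq_y; right; apply: (rat_sqrt_in_uQw (nonsquare_neq0 r_nsq) sq_y).
Qed.

Lemma in_Qadj_sqrt_of_disc (r q : rat) : r * (a ^+ 2 - 4%:R * b) = q ^+ 2 ->
  exists y, in_Qadj theta y /\ ratr r = y ^+ 2.
Proof.
move=> rq; pose z := ratr a + 2%:R * w.
have z_neq0 : z != 0.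
  apply/eqP => z0; have /w_coords_eq0[_ /eqP] : ratr a + ratr 2%:R * w = 0.
    by rewrite ratr_nat.
  by rewrite pnatr_eq0.
have z2 : z ^+ 2 = ratr (a ^+ 2 - 4%:R * b).
  by rewrite !(rmorphB, rmorphM, rmorphXn) /= ratr_nat ratr_b /z; ring.
exists (ratr q / z); split.
  have -> : ratr q / z = ev theta q%:P / ev theta (a%:P + 2%:R *: 'X^6).
    by rewrite !pevalE rmorph_nat.
  by apply: in_Qadj_frac; rewrite !pevalE rmorph_nat.
have D_neq0 : ratr (a ^+ 2 - 4%:R * b) != 0 :> algC by rewrite -z2 expf_neq0.
by rewrite expr_div_n z2 -rmorphXn -rq rmorphM mulfK.
Qed.

Lemma in_Qadj_sqrt_of_root_b (r q : rat) (t : algC) : r != 0 -> t ^+ 2 = ratr b ->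
  ratr r * (- ratr a + 2%:R * t) = ratr q ^+ 2 ->
  exists y, in_Qadj theta y /\ ratr r = y ^+ 2.
Proof.
move=> r_neq0 t2 rq; have rr_neq0 : ratr r != 0 :> algC by rewrite fmorph_eq0.
have [s t_s] : exists s, t = ratr s.
  exists ((q ^+ 2 / r + a) / 2%:R).
  by rewrite !(rmorphM, rmorphD, fmorphV, rmorphXn) /= rmorph1 -rq; field.
rewrite {}t_s in t2 rq.
have key : (w + ratr s) ^+ 2 = (- ratr a + 2%:R * ratr s) * w.
  have s2 : ratr s ^+ 2 - (- w ^+ 2 - ratr a * w) = 0 by rewrite t2 ratr_b subrr.
  by apply: (eq_of_sub_multiple (k := 1) s2); ring.
have q_neq0 : ratr q != 0 :> algC.
  apply/eqP => q0; have /w_coords_eq0[_ /eqP] : ratr s + ratr 1 * w = 0.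
    apply/eqP; rewrite rmorph1 mul1r addrC -sqrf_eq0 key.
    by move/eqP: rq; rewrite q0 expr0n /= mulf_eq0 (negPf rr_neq0) => /eqP ->; rewrite mul0r.
  by rewrite oner_eq0.
have den_neq0 : ev theta (q *: 'X^3) != 0.
  by rewrite !pevalE mulf_neq0 ?expf_neq0 ?theta_neq0.
exists (ratr r * (w + ratr s) / (ratr q * u)); split.
  have -> : ratr r * (w + ratr s) / (ratr q * u)
      = ev theta (r *: ('X^6 + s%:P)) / ev theta (q *: 'X^3) by rewrite !pevalE.
  exact: in_Qadj_frac.
move/eqP: (rq); rewrite -subr_eq0 => /eqP rq0.
rewrite expr_div_n exprMn key.
apply: (eq_of_sub_multiple (k := - (ratr r / ratr q ^+ 2)) rq0).
by field; rewrite q_neq0 theta_neq0.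
Qed.

End Dodecic.

Theorem proposition3p3 (a b : rat) (theta : algC) :
  irreducible_poly (f12 a b) ->
  root (map_poly ratr (f12 a b)) theta ->
  forall r : rat, ~ ratsq r ->
    ((exists y : algC, in_Qadj theta y /\ ratr r = y ^+ 2) <->
     (ratsq (r * (a ^+ 2 - 4%:R * b))
      \/ algC_in_Qsq (ratr r * (- ratr a + 2%:R * sqrtC (ratr b)))
      \/ algC_in_Qsq (ratr r * (- ratr a - 2%:R * sqrtC (ratr b))))).
Proof.
move=> f_irr f_root r r_nsq.
have f_theta : peval ratr theta (f12 a b) = 0 := rootP f_root.
have r_neq0 := nonsquare_neq0 r_nsq.
split=> [[y [y_in sq_y]] | ].
  have [|[s b_s [v rv]]] := rat_sqrt_in_Qadj_cases f_irr f_theta r_nsq y_in sq_y.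
    by left.
  have sq_v : ratr r * (- ratr a - 2%:R * ratr s) = ratr v ^+ 2 :> algC.
    by rewrite -rmorphXn -rv !(rmorphM, rmorphB, rmorphN) rmorph_nat.
  right; have := eqf_sqr (sqrtC (ratr b : algC)) (ratr s).
  rewrite sqrtCK b_s rmorphXn eqxx => /esym/orP[]/eqP ->; [right | left]; exists v => //.
  by rewrite mulrN.
case=> [[q rq] | [[q rq] | [q rq]]].
- apply: (in_Qadj_sqrt_of_disc f_irr f_theta rq).
- apply: (in_Qadj_sqrt_of_root_b f_irr f_theta r_neq0 (sqrtCK _) rq).
- have t2 : (- sqrtC (ratr b : algC)) ^+ 2 = ratr b by rewrite sqrrN sqrtCK.
  by apply: (in_Qadj_sqrt_of_root_b f_irr f_theta r_neq0 t2 (q := q)); rewrite mulrN.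
Qed.
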